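(* With the notation of the context, if $Q(\alpha_i)=Q^*(\alpha_i)=\lg\frac{N+i}{N+i-1}$ for all $1\le i\le N$, then $L(Q)=H(p)+D(p\|q)$.
   Context: Let $\mathcal S$ be a finite alphabet with $|\mathcal S|\ge2$, $p$ a probability distribution on $\mathcal S$ with $p(s)>0$, $N_s$ ($s\in\mathcal S$) positive integers, $N=\sum_sN_s$, $q(s)=N_s/N$, $\lg=\log_2$, and $\kappa_s=\lceil\lg(N/N_s)\rceil$ (so $\kappa_s\ge1$ and $N\le 2^{\kappa_s}N_s<2N$). Let $\alpha_1,\dots,\alpha_N$ be the states. For a probability distribution $Q$ on $\{\alpha_1,\dots,\alpha_N\}$ define $L(Q)=\sum_s p(s)\sum_{i=1}^N Q(\alpha_i)\ell_s(i)$, where $\ell_s(i)=\kappa_s-1$ if $i\le 2^{\kappa_s}N_s-N$ and $\ell_s(i)=\kappa_s$ otherwise. (This is the average code length of the Yokoo–Dubé-type sAEDS, whose state $\alpha_i$ encodes $s$ with $\ell_s(i)$ bits, when $Q$ is its stationary distribution with states indexed in non-increasing order of $Q$.) $Q^*(\alpha_i)=\lg\frac{N+i}{N+i-1}$, which sums to 1. $H(p)=-\sum p\lg p$, $D(p\|q)=\sum p\lg(p/q)$. *)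

From mathcomp Require Import all_boot all_order all_algebra.
From mathcomp Require Import all_classical all_reals all_analysis.
Set Implicit Arguments. Unset Strict Implicit. Unset Printing Implicit Defensive.
Import Order.TTheory GRing.Theory Num.Theory.
Local Open Scope ring_scope.

Section Defs.
Variables (R : realType) (S : finType).

Definition lg (x : R) : R := ln x / ln 2.

Definition Ntot (Ns : S -> nat) : nat := (\sum_(s : S) Ns s)%N.

Definition qdist (Ns : S -> nat) (s : S) : R := (Ns s)%:R / (Ntot Ns)%:R.

Definition kappa (Ns : S -> nat) (s : S) : int :=
  Num.ceil (lg ((Ntot Ns)%:R / (Ns s)%:R)).

Definition ell (Ns : S -> nat) (s : S) (i : nat) : R :=
  if (i%:R <= (2 : R) ^ (kappa Ns s) * (Ns s)%:R - (Ntot Ns)%:R)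
  then (kappa Ns s)%:~R - 1 else (kappa Ns s)%:~R.

(* average code length; states alpha_1..alpha_N are indexed by i = 1..N,
   Q i is the probability of alpha_i *)
Definition avg_len (p : S -> R) (Ns : S -> nat) (Q : nat -> R) : R :=
  \sum_(s : S) p s * \sum_(1 <= i < (Ntot Ns).+1) Q i * ell Ns s i.

Definition Qstar (N : nat) (i : nat) : R :=
  lg ((N + i)%:R / (N + i - 1)%:R).

Definition entropy (p : S -> R) : R := - \sum_(s : S) p s * lg (p s).

Definition kl_div (p q : S -> R) : R := \sum_(s : S) p s * lg (p s / q s).

End Defs.

From mathcomp Require Import all_boot all_order all_algebra.
From mathcomp Require Import all_classical all_reals all_analysis.
From mathcomp Require Import ring lra zify.
Import Order.TTheory GRing.Theory Num.Theory.
Local Open Scope ring_scope.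

(* The sums of [Q*] over initial segments telescope:
   [Q*(1) + ... + Q*(m) = lg ((N + m) / N)].  The state [alpha_i] spends
   [kappa_s - [i <= M_s]] bits on [s], where [M_s = 2^kappa_s N_s - N], so the
   expected length for [s] is [kappa_s lg 2 - lg (2^kappa_s N_s / N)]: the
   [kappa_s] cancel and leave [lg (N / N_s)].  Averaging over [p] gives
   [sum_s p(s) lg (1 / q(s)) = H(p) + D(p || q)]. *)

Section BinaryLogarithm.
Context {R : realType}.
Implicit Types x y : R.

Lemma ln2_gt0 : 0 < ln (2 : R).
Proof. by apply: ln_gt0; rewrite ltr1n. Qed.

Lemma lgM x y : 0 < x -> 0 < y -> lg (x * y) = lg x + lg y.
Proof. by move=> x0 y0; rewrite /lg lnM ?posrE // mulrDl. Qed.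

Lemma lgV x : 0 < x -> lg x^-1 = - lg x.
Proof. by move=> x0; rewrite /lg lnV ?posrE // mulNr. Qed.

Lemma lg1 : lg (1 : R) = 0.
Proof. by rewrite /lg ln1 mul0r. Qed.

Lemma lg2X n : lg (2 ^+ n : R) = n%:R.
Proof. by rewrite /lg lnXn // mulrnAl mulfV // gt_eqF ?ln2_gt0. Qed.

Lemma lg2 : lg (2 : R) = 1.
Proof. by rewrite -[2]expr1 lg2X. Qed.

Lemma ler_lg x y : 0 < x -> 0 < y -> (lg x <= lg y) = (x <= y).
Proof. by move=> x0 y0; rewrite /lg ler_pM2r ?invr_gt0 ?ln2_gt0 // ler_ln ?posrE. Qed.

Lemma ltr_lg x y : 0 < x -> 0 < y -> (lg x < lg y) = (x < y).
Proof. by move=> x0 y0; rewrite /lg ltr_pM2r ?invr_gt0 ?ln2_gt0 // ltr_ln ?posrE. Qed.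

Lemma ceil_lg_bounds x : 1 <= x ->
  exists2 k : nat, Num.ceil (lg x) = k%:Z & x <= 2 ^+ k < 2 * x.
Proof.
move=> x1; have x0 : 0 < x by apply: lt_le_trans x1.
have lg_ge0 : 0 <= lg x by rewrite -lg1 ler_lg.
have [k kE] : exists k : nat, Num.ceil (lg x) = k%:Z.
  have : 0 <= Num.ceil (lg x) by rewrite ceil_ge0; lra.
  by case: (Num.ceil (lg x)) => [k|k] // _; exists k.
exists k => //; have := ceil_itv (lg x); rewrite kE intrB /= => /andP[lo hi].
have pow0 : 0 < (2 : R) ^+ k by rewrite exprn_gt0.
rewrite -ler_lg // -ltr_lg ?mulr_gt0 // lgM // lg2X.
by rewrite lg2; apply/andP; split; lra.
Qed.

End BinaryLogarithm.

Section StationaryLength.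
Variable R : realType.

Lemma sum_Qstar (N m : nat) : (0 < N)%N ->
  \sum_(1 <= i < m.+1) Qstar R N i = lg ((N + m)%:R / N%:R).
Proof.
move=> N0; have Nr0 : 0 < (N%:R : R) by rewrite ltr0n.
elim: m => [|m IHm]; first by rewrite big_geq // addn0 divff ?lg1 // gt_eqF.
rewrite big_nat_recr //= IHm /Qstar -lgM ?divr_gt0 ?ltr0n; [|lia..].
congr lg; rewrite addnS subn1 /= mulrC mulrA mulfVK //.
by rewrite pnatr_eq0 addn_eq0 negb_and -lt0n N0.
Qed.

Lemma sum_Qstar_mul_len (N M k : nat) : (0 < N)%N -> (M <= N)%N ->
  \sum_(1 <= i < N.+1) Qstar R N i * (k%:R - (i <= M)%:R)
  = k%:R - lg ((N + M)%:R / N%:R).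
Proof.
move=> N0 MN; rewrite (eq_bigr _ (fun i _ => mulrBr _ _ _)) sumrB -big_distrl /=.
rewrite sum_Qstar // addnn -mul2n natrM mulfK ?pnatr_eq0 -?lt0n //.
rewrite lg2 mul1r -(@sum_Qstar N M N0).
rewrite (@big_nat_widen _ _ _ 1 M.+1 N.+1) //= [X in _ = _ - X]big_mkcond.
congr (_ - _); apply: eq_bigr => i _; rewrite ltnS.
by case: (i <= M)%N; rewrite ?mulr1 ?mulr0.
Qed.

Lemma sum_Qstar_ell (S : finType) (Ns : S -> nat) (s : S) :
  (0 < Ns s)%N -> (Ns s <= Ntot Ns)%N ->
  \sum_(1 <= i < (Ntot Ns).+1) Qstar R (Ntot Ns) i * ell R Ns s i
  = lg ((Ntot Ns)%:R / (Ns s)%:R).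
Proof.
set N := Ntot Ns => Ns0 NsN.
have N0 : (0 < N)%N by lia.
have [Nsr0 Nr0] : 0 < (Ns s)%:R :> R /\ 0 < N%:R :> R by rewrite !ltr0n.
have ge1 : 1 <= N%:R / (Ns s)%:R :> R by rewrite ler_pdivlMr // mul1r ler_nat.
have [k kE /andP[lo hi]] := ceil_lg_bounds _ ge1.
rewrite ler_pdivrMr // in lo; rewrite mulrA ltr_pdivlMr // in hi.
have [lo' hi'] : (N <= 2 ^ k * Ns s /\ 2 ^ k * Ns s < 2 * N)%N.
  by rewrite -(ler_nat R) -(ltr_nat R) !natrM natrX.
set M := (2 ^ k * Ns s - N)%N.
have ellE i : ell R Ns s i = k%:R - (i <= M)%:R.
  rewrite /ell /kappa kE -[(2 : R) ^ k%:Z]/((2 : R) ^+ k).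
  have -> : (2 : R) ^+ k * (Ns s)%:R - (Ntot Ns)%:R = M%:R.
    by rewrite /M natrB // natrM natrX.
  by rewrite ler_nat; case: (i <= M)%N; rewrite ?subr0.
rewrite (eq_bigr _ (fun i _ => congr1 _ (ellE i))) sum_Qstar_mul_len //; last by lia.
have -> : (N + M = 2 ^ k * Ns s)%N by lia.
rewrite natrM natrX -mulrA lgM ?divr_gt0 ?exprn_gt0 // lg2X.
by rewrite -invf_div lgV ?divr_gt0 //; ring.
Qed.

End StationaryLength.

Theorem lemma1 (R : realType) (S : finType) (p : S -> R) (Ns : S -> nat)
    (Q : nat -> R) :
  (1 < #|S|)%N ->
  (forall s, 0 < p s) -> \sum_(s : S) p s = 1 ->
  (forall s, (0 < Ns s)%N) ->
  (forall i, (1 <= i <= Ntot Ns)%N -> Q i = Qstar R (Ntot Ns) i) ->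
  avg_len p Ns Q = entropy p + kl_div p (qdist R Ns).
Proof.
move=> _ p0 _ Ns0 QE.
rewrite /avg_len /entropy /kl_div -sumrN -big_split /=.
apply: eq_bigr => s _.
have NsN : (Ns s <= Ntot Ns)%N by rewrite /Ntot (bigD1 s) //= leq_addr.
have NsN_pos : 0 < (Ntot Ns)%:R / (Ns s)%:R :> R.
  by rewrite divr_gt0 // ltr0n //; apply: leq_trans NsN.
rewrite (@eq_big_nat _ _ _ 1 _ _ (fun i => Qstar R (Ntot Ns) i * ell R Ns s i)).
  by rewrite sum_Qstar_ell // /qdist invf_div lgM //; ring.
by move=> i /andP[i1 iN]; rewrite QE // i1.
Qed.
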